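(* Let $G$ be a finite simple graph, $r\geqslant 1$, let $\mathcal{C}$ be a minimal $r$-system of chorded cycles in $G$, and let $C\in\mathcal{C}$. Suppose $u$ is a vertex of $G$ not lying on any cycle of $\mathcal{C}$ with $d_C(u)\geqslant 3$. Then one of the following holds: (1) $|V(C)|=4$ and $d_C(u)\in\{3,4\}$; (2) $|V(C)|=5$, $d_C(u)=3$, and two of the vertices of $N_C(u)$ are both at distance $2$ on $C$ from the third vertex of $N_C(u)$; (3) $|V(C)|=6$, $d_C(u)=3$, and for every vertex $v$ not lying on any cycle of $\mathcal{C}$, the subgraph of $G$ induced by $V(C)\cup\{v\}$ is triangle-free.
   Context: A chorded cycle is a cycle together with an edge of the graph, not on the cycle, joining two vertices of the cycle. A minimal $r$-system of chorded cycles in $G$ is a collection of $r$ pairwise vertex-disjoint chorded cycles of $G$ whose total number of vertices is as small as possible among all such collections. $N_C(u)=N_G(u)\cap V(C)$ and $d_C(u)=|N_C(u)|$; distance on $C$ means distance in the cycle $C$ itself. *)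

From mathcomp Require Import all_boot.
Set Implicit Arguments. Unset Strict Implicit. Unset Printing Implicit Defensive.

Section Graphs.
Variable T : finType.
Variable adj : rel T.

Definition simple_graph : Prop := symmetric adj /\ irreflexive adj.

Definition is_cycle (c : seq T) : Prop :=
  2 < size c /\ uniq c /\ path.cycle adj c.

Definition cycle_edge (c : seq T) (x y : T) : bool :=
  (y == next c x) || (x == next c y).

Definition chorded_cycle (c : seq T) : Prop :=
  is_cycle c /\ exists x y, [/\ x \in c, y \in c, adj x y & ~~ cycle_edge c x y].

Definition r_system (r : nat) (S : seq (seq T)) : Prop :=
  [/\ size S = r, (forall c, c \in S -> chorded_cycle c)
    & pairwise (fun c d : seq T => [disjoint c & d]) S].

Definition total_vertices (S : seq (seq T)) : nat := sumn (map size S).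

Definition minimal_r_system (r : nat) (S : seq (seq T)) : Prop :=
  r_system r S /\
  forall S', r_system r S' -> total_vertices S <= total_vertices S'.

Definition nbhd_on (c : seq T) (u : T) : {set T} := [set x in c | adj u x].
Definition deg_on (c : seq T) (u : T) : nat := #|nbhd_on c u|.

Definition cycle_dist (c : seq T) (x y : T) : nat :=
  let i := index x c in let j := index y c in
  let d := if i <= j then j - i else i - j in
  minn d (size c - d).

Definition triangle_free_on (A : pred T) : Prop :=
  ~ exists a b d, [/\ a \in A, b \in A, d \in A & [&& adj a b, adj b d & adj a d]].

End Graphs.

From mathcomp Require Import all_boot zify.
Set Implicit Arguments. Unset Strict Implicit. Unset Printing Implicit Defensive.

(* If u sees the vertices C`_i, C`_j, C`_k of C, in this order along C, then u
   and the arc of C from C`_i to C`_k form a chorded cycle (with chord u C`_j)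
   built from C and a vertex outside the system; minimality of the system forces
   it to have at least |C| vertices.  Applied to the three arcs between
   consecutive neighbours of u this gives |C| <= 6, and a chorded cycle has at
   least 4 vertices.  For |C| = 5, 6 the admissible neighbourhoods of u are
   enumerated; for |C| = 6, u sees every other vertex, and a triangle in C + v
   would close a chorded cycle on at most 5 vertices of C, u and v. *)

Lemma nth_rot (T : Type) (x0 : T) (s : seq T) i t : i <= size s -> t < size s ->
  nth x0 (rot i s) t = nth x0 s ((t + i) %% size s).
Proof.
move=> isz tsz; rewrite /rot nth_cat size_drop.
case: ltnP => h; first by rewrite nth_drop modn_small 1?addnC //; lia.
rewrite nth_take; last by lia.
have -> : t + i = (t - (size s - i)) + size s by lia.
by rewrite modnDr modn_small //; lia.
Qed.

Definition gap n i j := (j + n - i) %% n.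

Lemma gapK n i j : i < n -> j < n -> (gap n i j + i) %% n = j.
Proof.
move=> ilt jlt; rewrite /gap modnDml.
have -> : j + n - i + i = j + n by lia.
by rewrite modnDr modn_small.
Qed.

Lemma gap_lt n i j : 0 < n -> gap n i j < n.
Proof. by move=> n0; rewrite /gap ltn_mod. Qed.

Lemma gap_le n i j : i <= j < n -> gap n i j = j - i.
Proof.
move=> /andP [ij jn]; rewrite /gap.
have -> : j + n - i = j - i + n by lia.
by rewrite modnDr modn_small //; lia.
Qed.

Lemma gap_gt n i j : j < i < n -> gap n i j = j + n - i.
Proof. by move=> /andP [ji jn]; rewrite /gap modn_small //; lia. Qed.

(* [N] marks the neighbours of u on a cycle of length [n]; the fan through
   neighbours [i], [j], [k] met in this order has [gap n i k + 2] vertices. *)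
Definition no_short_fan n (N : nat -> bool) :=
  all (fun i => all (fun j => all (fun k =>
    ~~ [&& N i, N j, N k, 0 < gap n i j, gap n i j < gap n i k & gap n i k + 2 < n])
    (iota 0 n)) (iota 0 n)) (iota 0 n).

Lemma no_short_fanP n (N : nat -> bool) :
  reflect (forall i j k, i < n -> j < n -> k < n -> N i -> N j -> N k ->
             0 < gap n i j < gap n i k -> n <= gap n i k + 2)
          (no_short_fan n N).
Proof.
apply: (iffP idP) => [fan i j k il jl kl Ni Nj Nk /andP [ij jk] | fan].
  have := allP (allP (allP fan i _) j _) k; rewrite !mem_iota /= il jl kl.
  by rewrite Ni Nj Nk ij jk /= -leqNgt; apply.
apply/allP => i; rewrite mem_iota => /andP [_ il].
apply/allP => j; rewrite mem_iota => /andP [_ jl].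
apply/allP => k; rewrite mem_iota => /andP [_ kl].
apply/negP => /and5P [Ni Nj Nk ij /andP [jk short]].
by have := fan i j k il jl kl Ni Nj Nk; rewrite ij jk leqNgt short => /(_ isT).
Qed.

(* The three arcs between consecutive neighbours cover the cycle. *)
Lemma no_short_fan_le6 n N : no_short_fan n N -> 3 <= count N (iota 0 n) -> n <= 6.
Proof.
move=> /no_short_fanP fan c3.
set P := filter N (iota 0 n).
have szP : 3 <= size P by rewrite size_filter.
have sortP : sorted ltn P by apply: sorted_filter; [exact: ltn_trans|exact: iota_ltn_sorted].
have ltP := sorted_ltn_nth ltn_trans 0 sortP.
have memP m : m < 3 -> N (nth 0 P m) && (nth 0 P m < n).
  by move=> m3; have := mem_nth 0 (leq_trans m3 szP); rewrite mem_filter mem_iota.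
have ab : nth 0 P 0 < nth 0 P 1 by apply: ltP; rewrite ?inE; lia.
have bc : nth 0 P 1 < nth 0 P 2 by apply: ltP; rewrite ?inE; lia.
move: (memP 0 isT) (memP 1 isT) (memP 2 isT) ab bc.
set a := nth 0 P 0; set b := nth 0 P 1; set c := nth 0 P 2.
move=> /andP [Na an] /andP [Nb bn] /andP [Nc cn] ab bc.
have := fan a b c an bn cn Na Nb Nc; rewrite !gap_le; try lia.
have := fan b c a bn cn an Nb Nc Na; rewrite gap_le ?gap_gt; try lia.
have := fan c a b cn an bn Nc Na Nb; rewrite !gap_gt; lia.
Qed.

Definition cyc_dist n i j :=
  let d := if i <= j then j - i else i - j in minn d (n - d).

Definition pentagon_pattern (N : nat -> bool) :=
  (count N (iota 0 5) == 3) && has (fun i => has (fun j => has (fun k =>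
   [&& N i, N j, N k, i != j, i != k, j != k, cyc_dist 5 i k == 2 & cyc_dist 5 j k == 2])
   (iota 0 5)) (iota 0 5)) (iota 0 5).

Definition hexagon_pattern (N : nat -> bool) :=
  (count N (iota 0 6) == 3) &&
  ([&& N 0, ~~ N 1, N 2, ~~ N 3, N 4 & ~~ N 5] || [&& ~~ N 0, N 1, ~~ N 2, N 3, ~~ N 4 & N 5]).

Lemma no_short_fan5 N : no_short_fan 5 N -> 3 <= count N (iota 0 5) -> pentagon_pattern N.
Proof.
rewrite /no_short_fan /pentagon_pattern /=.
by case: (N 0); case: (N 1); case: (N 2); case: (N 3); case: (N 4); vm_compute.
Qed.

Lemma no_short_fan6 N : no_short_fan 6 N -> 3 <= count N (iota 0 6) -> hexagon_pattern N.
Proof.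
rewrite /no_short_fan /hexagon_pattern /=.
by case: (N 0); case: (N 1); case: (N 2); case: (N 3); case: (N 4); case: (N 5); vm_compute.
Qed.

Section ChordedCycles.
Variables (T : finType) (adj : rel T).

Definition off_system (S : seq (seq T)) (x : T) := forall D, D \in S -> x \notin D.

Definition shortest_chorded (C : seq T) (P : T -> Prop) :=
  forall L, chorded_cycle adj L -> (forall x, x \in L -> x \in C \/ P x) ->
  size C <= size L.

(* Replacing C by such an L in the system gives another r-system. *)
Lemma minimal_system_shortest r S C :
  minimal_r_system adj r S -> C \in S -> shortest_chorded C (off_system S).
Proof.
move=> [[sz ch pw] mn] CS L chL.
move: sz ch pw mn; case/splitPr: S / CS => s1 s2 sz ch pw mn LCP.
move: (pw); rewrite !pairwise_cat !pairwise_cons => /and4P [a1 pw1 a2 pw2].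
have disjL D : D \in s1 ++ s2 -> [disjoint L & D].
  move=> DS; rewrite disjoint_has; apply/hasPn => x xL /=.
  case: (LCP x xL) => [xC|]; last first.
    by apply; move: DS; rewrite !mem_cat in_cons => /orP [->|->]; rewrite ?orbT.
  move: DS; rewrite mem_cat => /orP [Ds1|Ds2].
  - by rewrite (disjointFl (allrelP a1 _ _ Ds1 (mem_head _ _)) xC).
  - by rewrite (disjointFr (allP a2 _ Ds2) xC).
suff sysL : r_system adj r (s1 ++ L :: s2).
  by have := mn _ sysL; rewrite /total_vertices !map_cat !sumn_cat /=; lia.
split.
- by rewrite -sz !size_cat.
- move=> c; rewrite mem_cat in_cons => /or3P [cs1|/eqP->//|cs2]; apply: ch.
  + by rewrite mem_cat cs1.
  + by rewrite mem_cat in_cons cs2 !orbT.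
rewrite !pairwise_cat !pairwise_cons; apply/and4P; split => //.
- apply/allrelP => x y xs1; rewrite in_cons => /orP [/eqP->|ys2].
  + by rewrite disjoint_sym; apply: disjL; rewrite mem_cat xs1.
  + by apply: (allrelP a1); rewrite // in_cons ys2 orbT.
- by apply/allP => y ys2; apply: disjL; rewrite mem_cat ys2 orbT.
Qed.

Lemma deg_on_count C u : uniq C ->
  deg_on adj C u = count (fun t => adj u (nth u C t)) (iota 0 (size C)).
Proof.
move=> uC; rewrite /deg_on /nbhd_on.
have -> : [set x in C | adj u x] = [set x in filter (adj u) C].
  by apply/setP => x; rewrite !inE mem_filter andbC.
rewrite cardsE (card_uniqP _) ?filter_uniq // size_filter.
by rewrite -{1}(mkseq_nth u C) /mkseq count_map.
Qed.

Lemma chorded_cycle4 a b c d : uniq [:: a; b; c; d] ->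
  adj a b -> adj b c -> adj c d -> adj d a -> adj b d -> chorded_cycle adj [:: a; b; c; d].
Proof.
move=> un ab bc cd da bd; split; first by split => //; split => //=; rewrite ab bc cd da.
exists b, d; split; rewrite ?inE ?eqxx ?orbT //.
move: un; rewrite /= !inE !negb_or => /and4P [/and3P [nab _ nad] /andP [_ nbd] ncd _].
rewrite /cycle_edge /next /= !eqxx (eq_sym b a) (negbTE nab) (eq_sym d a) (negbTE nad).
by rewrite (eq_sym d b) (negbTE nbd) (eq_sym d c) (negbTE ncd) eq_sym.
Qed.

Lemma chorded_cycle5 a b c d e : uniq [:: a; b; c; d; e] ->
  adj a b -> adj b c -> adj c d -> adj d e -> adj e a -> adj b d ->
  chorded_cycle adj [:: a; b; c; d; e].
Proof.
move=> un ab bc cd de ea bd.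
split; first by split => //; split => //=; rewrite ab bc cd de ea.
exists b, d; split; rewrite ?inE ?eqxx ?orbT //.
move: un; rewrite /= !inE !negb_or.
move=> /and5P [/and4P [nab _ nad _] /and3P [_ nbd nbe] /andP [ncd _] _ _].
rewrite /cycle_edge /next /= !eqxx (eq_sym b a) (negbTE nab) (eq_sym d a) (negbTE nad).
by rewrite (eq_sym d b) (negbTE nbd) (eq_sym d c) (negbTE ncd) /=.
Qed.

Lemma cycle_dist_nth (C : seq T) x0 i j : uniq C -> i < size C -> j < size C ->
  cycle_dist C (nth x0 C i) (nth x0 C j) = cyc_dist (size C) i j.
Proof. by move=> uniqC il jl; rewrite /cycle_dist !index_uniq. Qed.

Lemma eq_triangle_free (A B : pred T) :
  A =i B -> triangle_free_on adj A -> triangle_free_on adj B.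
Proof. by move=> eqAB freeA [a [b [d]]]; rewrite -!eqAB => tri; apply: freeA; exists a, b, d. Qed.

Lemma shortest_chorded_rot i C P :
  shortest_chorded C P -> shortest_chorded (rot i C) P.
Proof.
by move=> short L chL onL; rewrite size_rot; apply: short chL _ => x /onL; rewrite mem_rot.
Qed.

Lemma pentagon_nbhd C u : uniq C -> size C = 5 ->
  pentagon_pattern (fun t => adj u (nth u C t)) ->
  deg_on adj C u = 3 /\
  exists x y z, [/\ nbhd_on adj C u = [set x; y; z], [&& x != y, x != z & y != z],
                    cycle_dist C x z = 2 & cycle_dist C y z = 2].
Proof.
move=> uniqC sz5 /andP [/eqP cnt3 /hasP [i]]; rewrite mem_iota => /andP [_ il].
move=> /hasP [j]; rewrite mem_iota => /andP [_ jl].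
move=> /hasP [k]; rewrite mem_iota => /andP [_ kl].
move=> /and5P [Ni Nj Nk ij /and4P [ik jk /eqP dik /eqP djk]].
have deg3 : deg_on adj C u = 3 by rewrite deg_on_count // sz5.
have neq : [&& nth u C i != nth u C j, nth u C i != nth u C k & nth u C j != nth u C k].
  by rewrite !nth_uniq ?sz5 ?ij ?ik ?jk.
split=> //; exists (nth u C i), (nth u C j), (nth u C k).
split=> //; last by rewrite cycle_dist_nth ?sz5.
  apply/eqP; rewrite eq_sym eqEcard; apply/andP; split.
    by apply/subsetP => x; rewrite !inE => /orP [/orP [] | ] /eqP ->; rewrite mem_nth ?sz5.
  move: neq; rewrite -[#|nbhd_on _ _ _|]/(deg_on adj C u) deg3.
  by rewrite -setUA cardsU1 cards2 !inE negb_or => /and3P [-> -> ->].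
by rewrite cycle_dist_nth ?sz5.
Qed.

Hypothesis sg : simple_graph adj.

Lemma adj_sym x y : adj x y = adj y x. Proof. by case: sg => s _; apply: s. Qed.
Lemma adj_irr x : adj x x = false. Proof. by case: sg => _ i; apply: i. Qed.

Lemma chorded_cycle_gt3 L : chorded_cycle adj L -> 3 < size L.
Proof.
case=> [[s3 [un cy]] [x [y [xL yL a ce]]]].
case: L s3 un cy xL yL ce => [|a0 [|b0 [|c0 [|d0 L]]]] //= _.
rewrite !inE !negb_or => /and3P [/andP [ab ac] bc _] _.
rewrite /cycle_edge /next /=.
have ba : (b0 == a0) = false by rewrite eq_sym (negbTE ab).
have ca : (c0 == a0) = false by rewrite eq_sym (negbTE ac).
have cb : (c0 == b0) = false by rewrite eq_sym (negbTE bc).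
rewrite ?eqxx ?ba ?ca ?cb /=.
move=> hx hy; move: a; case/or3P: hx => /eqP ->; case/or3P: hy => /eqP ->.
all: by rewrite ?adj_irr ?eqxx ?ba ?ca ?cb ?orbT //= ?eqxx ?andbF.
Qed.

(* The chord is u C`_j. *)
Lemma chorded_fan C u j k : uniq C -> path.cycle adj C -> u \notin C -> 0 < j < k ->
  k < size C -> adj u (nth u C 0) -> adj u (nth u C j) -> adj u (nth u C k) ->
  chorded_cycle adj (u :: take k.+1 C).
Proof.
move=> uniqC cycC uC /andP [j0 jk] ksz a0 aj ak.
have jsz : j < size C by lia.
have szt : size (take k.+1 C) = k.+1 by rewrite size_take; case: ifP; lia.
split; first split.
- by rewrite /= szt; lia.
- split.
  + rewrite /= take_uniq // andbT; apply/negP => /mem_take; exact/negP.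
  + rewrite /= rcons_path; apply/andP; split; last by rewrite (take_nth u) // last_rcons adj_sym.
    case: C uniqC cycC uC jsz ksz a0 aj ak {szt} => [|c0 C'] //= _.
    rewrite rcons_path => /andP [p _] _ _ _ -> _ _ /=.
    by rewrite take_path.
set t := take k.+1 C.
have yt : nth u t j = nth u C j by rewrite nth_take //; lia.
have yu : (nth u C j == u) = false by apply/negP => /eqP h; move: uC; rewrite -h mem_nth.
have ytin : nth u C j \in t by rewrite -yt mem_nth // szt; lia.
exists u, (nth u C j); split.
- by rewrite mem_head.
- by rewrite in_cons ytin orbT.
- by [].
rewrite /cycle_edge !next_nth mem_head in_cons ytin orbT /= eqxx (eq_sym u (nth u C j)) yu.
rewrite -{2}yt index_uniq ?szt ?take_uniq //; last by lia.
rewrite !nth_take; [|lia|lia].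
rewrite nth_uniq //; [|lia].
rewrite negb_or; apply/andP; split; first by lia.
by apply/negP => /eqP h; move: uC; rewrite h mem_nth //; lia.
Qed.

Lemma shortest_no_short_fan C u P : uniq C -> path.cycle adj C -> u \notin C -> P u ->
  shortest_chorded C P -> no_short_fan (size C) (fun t => adj u (nth u C t)).
Proof.
move=> uniqC cycC uC Pu short; apply/no_short_fanP => i j k il jl kl Ni Nj Nk ijk.
set n := size C in il jl kl ijk *.
have n0 : 0 < n by lia.
have szr : size (rot i C) = n by rewrite size_rot.
have nthr t : t < n -> nth u (rot i C) t = nth u C ((t + i) %% n).
  by move=> tn; rewrite nth_rot //; lia.
have fan : chorded_cycle adj (u :: take (gap n i k).+1 (rot i C)).
  apply: (@chorded_fan _ _ (gap n i j)) => //.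
  - by rewrite rot_uniq.
  - by rewrite rot_cycle.
  - by rewrite mem_rot.
  - by rewrite szr gap_lt.
  - by rewrite nthr // add0n modn_small.
  - by rewrite nthr ?gap_lt ?gapK.
  - by rewrite nthr ?gap_lt ?gapK.
have := short _ fan; rewrite /= size_take szr.
have [_ | ] := ltnP; last lia.
rewrite addn2; apply=> x; rewrite in_cons => /orP [/eqP -> | /mem_take]; first by right.
by rewrite mem_rot; left.
Qed.

Ltac solve_uniq := rewrite /= ?inE; repeat (apply/andP; split); rewrite ?negb_or;
  repeat (apply/andP; split); try done; by rewrite eq_sym.
Ltac solve_adj := first [done | by rewrite adj_sym | solve_uniq].
Ltac split_mem H := rewrite !inE in H; repeat (case/orP: H => H); move/eqP: H => H; subst.
Ltac close_triangle := solve [ match goal with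
  | H : is_true (adj ?x ?x) |- _ => by rewrite adj_irr in H
  | F : is_true (adj _ _) -> False |- _ => apply: F; first [assumption | by rewrite adj_sym]
  | F : is_true (adj _ _) -> is_true (adj _ _) -> False |- _ =>
      apply: F; first [assumption | by rewrite adj_sym]
  | F : is_true (adj _ _) -> is_true (adj _ _) -> is_true (adj _ _) -> False |- _ =>
      apply: F; first [assumption | by rewrite adj_sym]
  end ].

Ltac too_short L :=
  have: 6 <= size L by match goal with
    | short : shortest_chorded _ _, onC : forall L, is_true (all _ L) -> _ |- _ =>
      apply: short;
      [ apply: chorded_cycle4 || apply: chorded_cycle5; solve_adj
      | apply: onC; by rewrite /= !inE !eqxx ?orbT ] end;
  by [].
Ltac contradict_nonadj := match goal with
  | H : is_true (~~ ?p) |- is_true ?p -> _ => by rewrite (negbTE H)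
  | |- _ -> _ => move=> ?; contradict_nonadj end.
Ltac too_short_unless_eq v u L :=
  case: (v =P u) => [-> | /eqP ? *]; [contradict_nonadj | too_short L].

Lemma alternating_hexagon_triangle_free (c0 c1 c2 c3 c4 c5 u v : T) (P : T -> Prop) :
  uniq [:: c0; c1; c2; c3; c4; c5] -> path.cycle adj [:: c0; c1; c2; c3; c4; c5] ->
  u \notin [:: c0; c1; c2; c3; c4; c5] -> v \notin [:: c0; c1; c2; c3; c4; c5] ->
  P u -> P v -> shortest_chorded [:: c0; c1; c2; c3; c4; c5] P ->
  adj u c0 -> adj u c2 -> adj u c4 -> ~~ adj u c1 -> ~~ adj u c3 -> ~~ adj u c5 ->
  triangle_free_on adj [predU [:: c0; c1; c2; c3; c4; c5] & pred1 v].
Proof.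
set C := [:: c0; c1; c2; c3; c4; c5].
move=> uniqC cycC uC vC Pu Pv short u0 u2 u4 u1 u3 u5.
have onC L : all (fun x => (x \in C) || (x == u) || (x == v)) L ->
    forall x, x \in L -> x \in C \/ P x.
  by move=> /allP onL x /onL /orP [/orP [->|/eqP ->]|/eqP ->]; by [left|right|right].
move: uniqC; rewrite /= !inE !negb_or => /and5P [/and5P [n01 n02 n03 n04 n05]
  /and4P [n12 n13 n14 n15] /and3P [n23 n24 n25] /andP [n34 n35] /andP [n45 _]].
move: uC vC; rewrite !inE !negb_or => /andP [nu0 /and5P [nu1 nu2 nu3 nu4 nu5]]
  /andP [nv0 /and5P [nv1 nv2 nv3 nv4 nv5]].
move: cycC => /= /and5P [e01 e12 e23 e34 /andP [e45 /andP [e50 _]]].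
(* Each configuration excluded below would close a chorded cycle on at most
   five vertices of C, u and v; every triangle of C + v contains one of them. *)
have no02 : adj c0 c2 -> False by move=> ?; too_short [:: u; c0; c1; c2].
have no24 : adj c2 c4 -> False by move=> ?; too_short [:: u; c2; c3; c4].
have no40 : adj c4 c0 -> False by move=> ?; too_short [:: u; c4; c5; c0].
have no13 : adj c1 c3 -> False by move=> ?; too_short [:: u; c2; c3; c1; c0].
have no35 : adj c3 c5 -> False by move=> ?; too_short [:: u; c4; c5; c3; c2].
have no51 : adj c5 c1 -> False by move=> ?; too_short [:: u; c0; c1; c5; c4].
have v03 : adj v c0 -> adj v c3 -> adj c0 c3 -> False.
  by move=> *; too_short [:: c2; c3; v; c0; c1].
have v14 : adj v c1 -> adj v c4 -> adj c1 c4 -> False.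
  by move=> *; too_short [:: c3; c4; v; c1; c2].
have v25 : adj v c2 -> adj v c5 -> adj c2 c5 -> False.
  by move=> *; too_short [:: c4; c5; v; c2; c3].
have v01 : adj v c0 -> adj v c1 -> False
  by too_short_unless_eq v u [:: u; c0; v; c1; c2].
have v12 : adj v c1 -> adj v c2 -> False
  by too_short_unless_eq v u [:: u; c2; v; c1; c0].
have v23 : adj v c2 -> adj v c3 -> False
  by too_short_unless_eq v u [:: u; c2; v; c3; c4].
have v34 : adj v c3 -> adj v c4 -> False
  by too_short_unless_eq v u [:: u; c4; v; c3; c2].
have v45 : adj v c4 -> adj v c5 -> False
  by too_short_unless_eq v u [:: u; c4; v; c5; c0].
have v50 : adj v c5 -> adj v c0 -> False
  by too_short_unless_eq v u [:: u; c0; v; c5; c4].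
move=> [a [b [d [ha hb hd /and3P [ab bd ad]]]]].
split_mem ha; split_mem hb; try close_triangle; split_mem hd; close_triangle.
Qed.

Lemma hexagon_triangle_free C u v P : uniq C -> path.cycle adj C -> size C = 6 ->
  u \notin C -> v \notin C -> P u -> P v -> shortest_chorded C P ->
  hexagon_pattern (fun t => adj u (nth u C t)) -> triangle_free_on adj [predU C & pred1 v].
Proof.
move=> uniqC cycC sz6 uC vC Pu Pv short /andP [_ pat].
have eC : C = [:: nth u C 0; nth u C 1; nth u C 2; nth u C 3; nth u C 4; nth u C 5].
  by rewrite -{1}(mkseq_nth u C) sz6.
case/orP: pat => /and5P [N0 N1 N2 N3 /andP [N4 N5]].
  have := @alternating_hexagon_triangle_free (nth u C 0) (nth u C 1) (nth u C 2)
    (nth u C 3) (nth u C 4) (nth u C 5) u v P.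
  by rewrite -eC; apply.
have eR : rot 1 C = [:: nth u C 1; nth u C 2; nth u C 3; nth u C 4; nth u C 5; nth u C 0].
  by rewrite {1}eC.
have := @alternating_hexagon_triangle_free (nth u C 1) (nth u C 2) (nth u C 3)
  (nth u C 4) (nth u C 5) (nth u C 0) u v P.
rewrite -eR rot_uniq rot_cycle !mem_rot => /(_ uniqC cycC uC vC Pu Pv).
move=> /(_ (shortest_chorded_rot short) N1 N3 N5 N2 N4 N0).
by apply: eq_triangle_free => x; rewrite !inE mem_rot.
Qed.

End ChordedCycles.

Theorem lemma3p2 (T : finType) (adj : rel T) (r : nat) (S : seq (seq T))
  (C : seq T) (u : T) :
  simple_graph adj -> 1 <= r ->
  minimal_r_system adj r S -> C \in S ->
  (forall D, D \in S -> u \notin D) ->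
  3 <= deg_on adj C u ->
  [\/ size C = 4 /\ (deg_on adj C u = 3 \/ deg_on adj C u = 4),
      [/\ size C = 5, deg_on adj C u = 3 &
          exists x y z, [/\ nbhd_on adj C u = [set x; y; z], [&& x != y, x != z & y != z],
                            cycle_dist C x z = 2 & cycle_dist C y z = 2]]
    | [/\ size C = 6, deg_on adj C u = 3 &
          forall v, (forall D, D \in S -> v \notin D) ->
            triangle_free_on adj [predU C & pred1 v]]].
Proof.
move=> sg _ minS CS uS d3.
have chC : chorded_cycle adj C by case: minS => [[_ chS _] _]; apply: chS.
have [[_ [uniqC cycC]] _] := chC.
have short := minimal_system_shortest minS CS.
have fan := shortest_no_short_fan sg uniqC cycC (uS C CS) uS short.
have degC := deg_on_count adj u uniqC.
rewrite degC in d3.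
have le6 := no_short_fan_le6 fan d3.
have gt3 := chorded_cycle_gt3 sg chC.
have [sz | sz | sz] : [\/ size C = 4, size C = 5 | size C = 6].
  by move: gt3 le6; case: (size C) => [|[|[|[|[|[|[|n]]]]]]] // _ _; constructor.
- constructor 1; split=> //; rewrite degC.
  move: d3 (count_size (fun t => adj u (nth u C t)) (iota 0 (size C))).
  by rewrite size_iota sz; set m := count _ _; lia.
- have pat : pentagon_pattern (fun t => adj u (nth u C t)).
    by apply: no_short_fan5; rewrite -sz.
  by have [deg3 nbhd] := pentagon_nbhd uniqC sz pat; constructor 2.
- have pat : hexagon_pattern (fun t => adj u (nth u C t)).
    by apply: no_short_fan6; rewrite -sz.
  constructor 3; split=> //; first by move: (pat); rewrite degC sz => /andP [/eqP].
  by move=> v vS; apply: hexagon_triangle_free uniqC cycC sz (uS C CS) (vS C CS) uS vS short pat.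
Qed.
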